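(* Let $n\ge 2$ and $A=(A_1,\dots,A_n)\in V_n$. If $A$ is similar to an upper triangular $n$-matrix, then $\sigma_{jk}(A)=0$ for all distinct $1\le j,k\le n$.
   Context: $V_n=(M_{2\times2}(\mathbb{C}))^{\times n}$ with $GL(2,\mathbb{C})$ acting by simultaneous conjugation $g\cdot A=(gA_1g^{-1},\dots,gA_ng^{-1})$; two elements are similar if they lie in the same orbit. $A$ is an upper triangular $n$-matrix if every $A_j$ is upper triangular. With $t_j=\mathsf{tr}(A_j)$, $t_{jk}=\mathsf{tr}(A_jA_k)$, define $\tau_{jk}=t_{jk}-\tfrac12 t_jt_k$ and $\sigma_{jk}=\tau_{jk}^2-\tau_{jj}\tau_{kk}$. *)

From mathcomp Require Import all_boot all_order all_algebra.
From mathcomp Require Import complex.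
From mathcomp Require Import Rstruct.
Set Implicit Arguments. Unset Strict Implicit. Unset Printing Implicit Defensive.
Import GRing.Theory Num.Theory.
Local Open Scope ring_scope.

Definition CC : Type := (complex Rdefinitions.R).

(* V_n : n-tuples of 2x2 complex matrices, indexed by 'I_n (index j <-> j+1). *)
Definition Vn (n : nat) := 'I_n -> 'M[CC]_2.

Definition conj_tuple n (g : 'M[CC]_2) (A : Vn n) : Vn n :=
  fun j => g *m A j *m invmx g.

Definition similar_tuple n (A B : Vn n) : Prop :=
  exists g : 'M[CC]_2, g \in unitmx /\ B = conj_tuple g A.

Definition upper_triangular_mx (M : 'M[CC]_2) : Prop :=
  forall i j : 'I_2, (j < i)%N -> M i j = 0.

Definition upper_triangular_tuple n (A : Vn n) : Prop :=
  forall j, upper_triangular_mx (A j).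

Definition t1 n (A : Vn n) (j : 'I_n) : CC := \tr (A j).
Definition t2 n (A : Vn n) (j k : 'I_n) : CC := \tr (A j *m A k).
Definition tauA n (A : Vn n) (j k : 'I_n) : CC :=
  t2 A j k - 2^-1 * t1 A j * t1 A k.
Definition sigmaA n (A : Vn n) (j k : 'I_n) : CC :=
  tauA A j k ^+ 2 - tauA A j j * tauA A k k.

(** [sigma] is built from traces of the [A_j] and of the products [A_j A_k],
    so it is invariant under simultaneous conjugation.  For upper triangular
    [A_j] with diagonal [(a_j, d_j)] one finds
    [tau_jk = (a_j - d_j) (a_k - d_k) / 2], a product of a factor depending
    on [j] and one depending on [k]; hence [tau_jk^2 = tau_jj tau_kk]. *)

From mathcomp Require Import all_boot all_order all_algebra.
From mathcomp Require Import complex Rstruct.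
From mathcomp Require Import ring.
Import GRing.Theory Num.Theory.
Local Open Scope ring_scope.

Section Conjugation.

Variables (R : comUnitRingType) (m : nat) (g : 'M[R]_m).
Hypothesis g_unit : g \in unitmx.

Lemma mxtrace_conj (M : 'M[R]_m) : \tr (g *m M *m invmx g) = \tr M.
Proof. by rewrite mxtrace_mulC mulmxA mulVmx // mul1mx. Qed.

Lemma mulmx_conj (M N : 'M[R]_m) :
  (g *m M *m invmx g) *m (g *m N *m invmx g) = g *m (M *m N) *m invmx g.
Proof. by rewrite -!mulmxA (mulmxA (invmx g)) mulVmx // mul1mx. Qed.

End Conjugation.

Section Invariance.

Variables (n : nat) (g : 'M[CC]_2) (A : Vn n).
Hypothesis g_unit : g \in unitmx.

Lemma t1_conj j : t1 (conj_tuple g A) j = t1 A j.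
Proof. exact: mxtrace_conj. Qed.

Lemma t2_conj j k : t2 (conj_tuple g A) j k = t2 A j k.
Proof. by rewrite /t2 /conj_tuple mulmx_conj // mxtrace_conj. Qed.

Lemma tauA_conj j k : tauA (conj_tuple g A) j k = tauA A j k.
Proof. by rewrite /tauA t2_conj !t1_conj. Qed.

Lemma sigmaA_conj j k : sigmaA (conj_tuple g A) j k = sigmaA A j k.
Proof. by rewrite /sigmaA !tauA_conj. Qed.

End Invariance.

Lemma mxtrace2 (R : nmodType) (M : 'M[R]_2) : \tr M = M 0 0 + M 1 1.
Proof.
rewrite /mxtrace 2!big_ord_recl big_ord0 addr0.
by congr (M _ _ + M _ _); apply: val_inj.
Qed.

Lemma mxtrace_mul_upper2 (R : pzSemiRingType) (M N : 'M[R]_2) :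
  M 1 0 = 0 -> N 1 0 = 0 -> \tr (M *m N) = M 0 0 * N 0 0 + M 1 1 * N 1 1.
Proof.
move=> M10 N10; rewrite mxtrace2 !mxE !big_ord_recl !big_ord0.
have -> : lift ord0 ord0 = 1 :> 'I_2 by apply: val_inj.
by rewrite M10 N10 mul0r mulr0 !addr0 add0r.
Qed.

Lemma tauA_upper n (B : Vn n) j k : upper_triangular_tuple B ->
  tauA B j k = (B j 0 0 - B j 1 1) * (B k 0 0 - B k 1 1) / 2.
Proof.
move=> B_upper; rewrite /tauA /t1 /t2 mxtrace_mul_upper2 ?(B_upper _ 1 0) //.
rewrite !mxtrace2.
have two_neq0 : (2 : CC) != 0 by rewrite pnatr_eq0.
by field.
Qed.

Lemma sigmaA_upper n (B : Vn n) j k : upper_triangular_tuple B ->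
  sigmaA B j k = 0.
Proof. by move=> B_upper; rewrite /sigmaA !tauA_upper //; ring. Qed.

Theorem proposition2p5 (n : nat) (hn : (2 <= n)%N) (A : Vn n) :
  (exists B : Vn n, upper_triangular_tuple B /\ similar_tuple A B) ->
  forall j k : 'I_n, j != k -> sigmaA A j k = 0.
Proof.
move=> [B [B_upper [g [g_unit B_def]]]] j k _.
by rewrite -(sigmaA_conj _ _ A g_unit) -B_def sigmaA_upper.
Qed.
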